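(* Let $p\ge2$ be an integer, $R\ge1$, $A\in GL_r(\mathbb{C}((z)))$, $C,C'\in I+z^RM_r(\mathbb{C}[[z]])$ and $A_0,A_0'\in GL_r(\mathbb{C})$ with $$A_0=C(z/p)^{-1}A(z)C(z),\qquad A_0'=C'(z/p)^{-1}A(z)C'(z).$$ Then $A_0=A_0'$. If for no integer $i\ge R$ is $p^i$ an eigenvalue of the linear map $X\mapsto A_0^{-1}XA_0$ on $M_r(\mathbb{C})$, then $C=C'$. This last condition holds with $R=1$ if $A_0$ is $p$-restricted.
   Context: $A_0$ is $p$-restricted if all its eigenvalues $c$ satisfy $1\le|c|<p$. *)

(* The base field C = complex numbers is taken to be an
   arbitrary numClosedFieldType K (ℂ is one). *)
From HB Require Import structures.
From mathcomp Require Import all_boot all_order all_algebra.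
Set Implicit Arguments. Unset Strict Implicit. Unset Printing Implicit Defensive.
Import Order.TTheory GRing.Theory Num.Theory.
Local Open Scope ring_scope.

(* A matrix power series F(z) = \sum_k F k z^k in M_r(K[[z]]) is a
   coefficient sequence nat -> 'M[K]_r.
   A matrix Laurent series in M_r(K((z))) is represented by a pair (v, a)
   meaning z^{-v} * \sum_k a k z^k (every Laurent series has this form). *)

Section PS.
Variables (K : numClosedFieldType) (r : nat).

Definition psmul (F G : nat -> 'M[K]_r) : nat -> 'M[K]_r :=
  fun k => \sum_(i < k.+1) F i *m G (k - i)%N.

Definition psone : nat -> 'M[K]_r := fun k => if k == 0%N then 1%:M else 0.

Definition psdil (p : nat) (F : nat -> 'M[K]_r) : nat -> 'M[K]_r :=
  fun k => (p%:R ^- k) *: F k.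

Definition in_I_zR (R : nat) (C : nat -> 'M[K]_r) : Prop :=
  C 0%N = 1%:M /\ forall k, (0 < k < R)%N -> C k = 0.

Definition laurent_GL (v : nat) (a : nat -> 'M[K]_r) : Prop :=
  exists (w : nat) (b : nat -> 'M[K]_r),
    (forall k, psmul a b k = if k == (v + w)%N then 1%:M else 0) /\
    (forall k, psmul b a k = if k == (v + w)%N then 1%:M else 0).

(* A_0 = C(z/p)^{-1} A(z) C(z), where A(z) = z^{-v} \sum_k a k z^k :
   C(z/p) has a two-sided inverse D in M_r(K[[z]]) and D * A * C equals the
   constant A_0 (as Laurent series). *)
Definition mahler_gauge (p : nat) (v : nat) (a : nat -> 'M[K]_r)
    (C : nat -> 'M[K]_r) (A0 : 'M[K]_r) : Prop :=
  exists D : nat -> 'M[K]_r,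
    psmul D (psdil p C) = psone /\ psmul (psdil p C) D = psone /\
    forall k, psmul (psmul D a) C k = if k == v then A0 else 0.

Definition conj_eigenvalue (A0 : 'M[K]_r) (lam : K) : Prop :=
  exists X : 'M[K]_r, X != 0 /\ invmx A0 *m X *m A0 = lam *: X.

Definition p_restricted (p : nat) (A0 : 'M[K]_r) : Prop :=
  forall c : K, eigenvalue A0 c -> 1 <= `|c| < p%:R.

End PS.

From HB Require Import structures.
From mathcomp Require Import all_boot all_order all_algebra.
From Stdlib Require Import FunctionalExtensionality.
Import Order.TTheory GRing.Theory Num.Theory.
Local Open Scope ring_scope.

Set Implicit Arguments.
Unset Strict Implicit.
Unset Printing Implicit Defensive.

(* If C and C' both gauge A to constants, G = C(z/p)^{-1} C'(z/p) satisfies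
   G(z) A0' = A0 G(pz), i.e. G_m A0' = p^m A0 G_m for every m.  As G_0 = I this
   gives A0 = A0'; then every nonzero G_m is an eigenvector of X |-> A0^-1 X A0
   for the eigenvalue p^m, while G_m = 0 for 0 < m < R since C, C' = I mod z^R.
   Hence, without such eigenvalues p^i (i >= R), G = I and C = C'.
   For p-restricted A0, an eigenvector X for p^i intertwines A0 and p^-i A0,
   which therefore share an eigenvalue z (Sylvester); so z and p^i z are both
   eigenvalues of A0, impossible in the annulus 1 <= |c| < p. *)

Section MatrixPowerSeries.
Variables (K : numClosedFieldType) (r : nat).
Implicit Types (F G H : nat -> 'M[K]_r) (M : 'M[K]_r).

Lemma psmul_rev F G i : psmul F G i = \sum_(j < i.+1) F (i - j)%N *m G j.
Proof.
rewrite /psmul (reindex_inj rev_ord_inj) /=.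
by apply: eq_bigr => j _; rewrite (sub_ordK j).
Qed.

Lemma psmulA F G H : psmul F (psmul G H) = psmul (psmul F G) H.
Proof.
apply: functional_extensionality => i.
rewrite [psmul (psmul _ _) _ _]psmul_rev [psmul F _ _]/psmul.
pose term j k := F j *m (G (i - j - k)%N *m H k).
transitivity (\sum_(j < i.+1) \sum_(k < i.+1 | (k <= i - j)%N) term j k).
  apply: eq_bigr => /= j _; rewrite psmul_rev mulmx_sumr /=.
  by rewrite (big_ord_narrow_leq (leq_subr _ _)).
rewrite (exchange_big_dep predT) //=; apply: eq_bigr => k _.
transitivity (\sum_(j < i.+1 | (j <= i - k)%N) term j k).
  apply: eq_bigl => j; rewrite -ltnS -(ltnS j) -!subSn ?leq_ord //.
  by rewrite -subn_gt0 -(subn_gt0 j) -!subnDA addnC.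
rewrite (big_ord_narrow_leq (leq_subr _ _)) mulmx_suml /=.
by apply: eq_bigr => j _; rewrite /term -!subnDA addnC mulmxA.
Qed.

Lemma psmul_onel F : psmul (psone K r) F = F.
Proof.
apply: functional_extensionality => k.
rewrite /psmul big_ord_recl /= subn0 mul1mx big1 ?addr0 // => i _.
by rewrite /psone /= mul0mx.
Qed.

Lemma psmul_oner F : psmul F (psone K r) = F.
Proof.
apply: functional_extensionality => k.
rewrite psmul_rev big_ord_recl /= subn0 mulmx1 big1 ?addr0 // => i _.
by rewrite /psone /= mulmx0.
Qed.

Lemma psmul_coef0 F G : psmul F G 0 = F 0%N *m G 0%N.
Proof. by rewrite /psmul big_ord1. Qed.

(* The constant series [M] shifted to degree [v], i.e. [z^v M]; the
   Laurent series [z^{-v} (z^v M)] is the constant [M]. *)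
Definition psmono (v : nat) M : nat -> 'M[K]_r :=
  fun k => if k == v then M else 0.

Lemma psmul_monol v M F m : psmul (psmono v M) F (v + m) = M *m F m.
Proof.
rewrite /psmul (bigD1 (@Ordinal (v + m).+1 v (leq_addr m v))) //=.
rewrite big1 ?addr0.
  by rewrite /psmono eqxx addKn.
move=> i /eqP ne; rewrite /psmono; case: eqP => [e|_]; last by rewrite mul0mx.
by case: ne; apply: val_inj.
Qed.

Lemma psmul_monor v M F m : psmul F (psmono v M) (v + m) = F m *m M.
Proof.
rewrite psmul_rev (bigD1 (@Ordinal (v + m).+1 v (leq_addr m v))) //=.
rewrite big1 ?addr0.
  by rewrite /psmono eqxx addKn.
move=> i /eqP ne; rewrite /psmono; case: eqP => [e|_]; last by rewrite mulmx0.
by case: ne; apply: val_inj.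
Qed.

Definition pssubst (x : K) F : nat -> 'M[K]_r := fun k => x ^+ k *: F k.

Lemma pssubstM x F G :
  pssubst x (psmul F G) = psmul (pssubst x F) (pssubst x G).
Proof.
apply: functional_extensionality => k.
rewrite /pssubst /psmul scaler_sumr; apply: eq_bigr => i _.
by rewrite -scalemxAr -scalemxAl scalerA -exprD subnK // -ltnS.
Qed.

Lemma pssubst_one x : pssubst x (psone K r) = psone K r.
Proof.
apply: functional_extensionality => k; rewrite /pssubst /psone.
by case: eqP => [->|_]; rewrite ?expr0 ?scale1r ?scaler0.
Qed.

Lemma psdilK p F : p%:R != 0 :> K -> pssubst p%:R (psdil p F) = F.
Proof.
move=> p0; apply: functional_extensionality => k.
by rewrite /pssubst /psdil scalerA mulfV ?expf_neq0 ?scale1r.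
Qed.

Lemma in_I_zR_psdil p R F : in_I_zR R F -> in_I_zR R (psdil p F).
Proof.
case=> F0 FR; split => [|k kR]; first by rewrite /psdil F0 expr0 invr1 scale1r.
by rewrite /psdil FR ?scaler0.
Qed.

Lemma in_I_zR_linv R F G :
  in_I_zR R G -> psmul F G = psone K r -> in_I_zR R F.
Proof.
case=> G0 GR FG.
have := congr1 (fun H => H 0%N) FG; rewrite /= psmul_coef0 G0 mulmx1 => F0.
split=> // m /andP[m0 mR].
have := congr1 (fun H => H m) FG; rewrite /= /psmul big_ord_recr /= subnn G0.
rewrite mulmx1 /psone (gtn_eqF m0) big1 ?add0r // => i _.
rewrite GR ?mulmx0 // subn_gt0 ltn_ord /=.
exact: leq_ltn_trans (leq_subr _ _) mR.
Qed.

Lemma in_I_zR_mul R F G :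
  in_I_zR R F -> in_I_zR R G -> in_I_zR R (psmul F G).
Proof.
case=> F0 FR [G0 GR]; split; first by rewrite psmul_coef0 F0 G0 mulmx1.
move=> m /andP[m0 mR]; rewrite /psmul big1 // => i _.
have [->|i0] := posnP i; first by rewrite subn0 GR ?m0 // mulmx0.
by rewrite FR ?mul0mx // i0 (leq_ltn_trans _ mR) // -ltnS.
Qed.

Lemma in_I_zR_eq_one R G :
  in_I_zR R G -> (forall m, (R <= m)%N -> G m = 0) -> G = psone K r.
Proof.
case=> G0 GR Ghigh; apply: functional_extensionality => m.
have [->|m0] := posnP m; first by rewrite G0.
rewrite /psone (gtn_eqF m0).
by have [mR|/Ghigh//] := ltnP m R; rewrite GR ?m0.
Qed.

End MatrixPowerSeries.

Lemma conj_eigenvalue_intertwine (K : numClosedFieldType) (r : nat)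
    (A0 X : 'M[K]_r) (lam : K) :
  A0 \in unitmx -> X != 0 -> X *m A0 = lam *: (A0 *m X) ->
  conj_eigenvalue A0 lam.
Proof.
move=> uA0 X0 XA0; exists X; split => //.
by rewrite -mulmxA XA0 -scalemxAr mulKmx.
Qed.

Section Gauge.
Variables (K : numClosedFieldType) (r p v : nat).
Variables (A C C' D D' : nat -> 'M[K]_r) (A0 A0' : 'M[K]_r).
Hypothesis p_neq0 : p%:R != 0 :> K.
Hypothesis CD : psmul (psdil p C) D = psone K r.
Hypothesis DAC : psmul (psmul D A) C = psmono v A0.
Hypothesis CD' : psmul (psdil p C') D' = psone K r.
Hypothesis DAC' : psmul (psmul D' A) C' = psmono v A0'.

Let G := psmul D (psdil p C').

Lemma gauge_transition :
  psmul G (psmono v A0') = psmul (psmono v A0) (pssubst p%:R G).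
Proof.
(* Both sides equal [D A C']. *)
have CsubstD : psmul C (pssubst p%:R D) = psone K r.
  by rewrite -[C](psdilK C p_neq0) -pssubstM CD pssubst_one.
rewrite /G pssubstM psdilK // -DAC -DAC'.
rewrite -psmulA [psmul (psdil p C') _]psmulA [psmul (psdil p C') _]psmulA CD'.
by rewrite psmul_onel -!psmulA [psmul C (psmul _ _)]psmulA CsubstD psmul_onel.
Qed.

Lemma gauge_transition_coef m : G m *m A0' = p%:R ^+ m *: (A0 *m G m).
Proof.
by rewrite -(psmul_monor v) gauge_transition psmul_monol -scalemxAr.
Qed.

Lemma gauge_transition_one : G = psone K r -> C = C'.
Proof.
move=> G1; rewrite -[C](psdilK C p_neq0) -[C'](psdilK C' p_neq0); congr pssubst.
by rewrite -[psdil p C]psmul_oner -G1 /G psmulA CD psmul_onel.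
Qed.

End Gauge.

Section Eigenvalue.
Variable F : fieldType.

Lemma eigenvalue_unitmx n (A : 'M[F]_n) a :
  eigenvalue A a = (A - a%:M \notin unitmx).
Proof. by rewrite /eigenvalue /eigenspace kermx_eq0 row_free_unit. Qed.

Lemma eigenvalueZ n (A : 'M[F]_n) c a :
  c != 0 -> eigenvalue (c *: A) (c * a) = eigenvalue A a.
Proof.
move=> c0; rewrite !eigenvalue_unitmx -scale_scalar_mx -scalerBr.
by rewrite unitmxZ ?unitfE.
Qed.

End Eigenvalue.

Lemma horner_mx_intertwine (R : comNzRingType) m n (A : 'M[R]_m.+1)
    (B : 'M[R]_n.+1) (X : 'M[R]_(m.+1, n.+1)) q :
  A *m X = X *m B -> horner_mx A q *m X = X *m horner_mx B q.
Proof.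
move=> AX; elim/poly_ind: q => [|q c IH].
  by rewrite !rmorph0 mul0mx mulmx0.
rewrite !rmorphD !rmorphM /= !horner_mx_X !horner_mx_C -!mulmxE.
by rewrite mulmxDl mulmxDr -mulmxA AX mulmxA IH -mulmxA scalar_mxC.
Qed.

Section CommonEigenvalue.
Variable F : closedFieldType.

(* Sylvester: evaluating the characteristic polynomial of [A] at [B] gives a
   matrix that kills [X] and is invertible unless [A] and [B] share an
   eigenvalue. *)
Lemma intertwine_common_eigenvalue m n (A : 'M[F]_m) (B : 'M[F]_n) X :
  A *m X = X *m B -> X != 0 -> exists2 z, eigenvalue A z & eigenvalue B z.
Proof.
case: m A X => [|m] A X AX; first by rewrite [X]flatmx0 eqxx.
case: n B X AX => [|n] B X AX; first by rewrite [X]thinmx0 eqxx.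
move=> X0; have [rs charA] := closed_field_poly_normal (char_poly A).
rewrite (monicP (char_poly_monic A)) scale1r in charA.
have rootA z : z \in rs -> eigenvalue A z.
  by move=> zrs; rewrite eigenvalue_root_char charA root_prod_XsubC.
have [/hasP[z /rootA Az Bz] | noB] := boolP (has (eigenvalue B) rs).
  by exists z.
have unit_charA_B : horner_mx B (char_poly A) \in unitmx.
  rewrite charA rmorph_prod /=; apply: unitr_prod_in => z zrs _.
  rewrite rmorphB /= horner_mx_X horner_mx_C.
  change (B - z%:M \in unitmx); apply: contraR noB.
  by rewrite -eigenvalue_unitmx => Bz; apply/hasP; exists z.
have XcharA : X *m horner_mx B (char_poly A) = 0.
  by rewrite -(horner_mx_intertwine _ AX) Cayley_Hamilton mul0mx.
by move: X0; rewrite -(mulmxK unit_charA_B X) XcharA mul0mx eqxx.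
Qed.

End CommonEigenvalue.

Lemma p_restricted_no_conj_eigenvalue (K : numClosedFieldType) (r p i : nat)
    (A0 : 'M[K]_r) :
  (0 < p)%N -> A0 \in unitmx -> p_restricted p A0 -> (0 < i)%N ->
  ~ conj_eigenvalue A0 (p%:R ^+ i).
Proof.
move=> p_gt0 uA0 restricted i_gt0 [X [X0 eigX]].
set lam : K := p%:R ^+ i.
have lam0 : lam != 0 by rewrite expf_neq0 // pnatr_eq0 -lt0n.
have XA0 : X *m A0 = lam *: (A0 *m X).
  by rewrite scalemxAr -eigX !mulmxA mulmxV // mul1mx.
have A0X : A0 *m X = X *m (lam^-1 *: A0).
  by rewrite -scalemxAr XA0 scalerA mulVf // scale1r.
have [z A0z A0z'] := intertwine_common_eigenvalue A0X X0.
have A0lamz : eigenvalue A0 (lam * z).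
  by move: A0z'; rewrite -(eigenvalueZ _ z lam0) scalerA mulfV // scale1r.
have /andP[z_ge1 _] := restricted _ A0z.
have p_le : p%:R <= `|lam * z|.
  rewrite normrM normrX normr_nat.
  apply: le_trans (ler_eXnr i_gt0 _) _; first by rewrite ler1n.
  by rewrite ler_peMr // exprn_ge0.
have /andP[_ /(le_lt_trans p_le)] := restricted _ A0lamz.
by rewrite ltxx.
Qed.

Theorem lemma5p1 (K : numClosedFieldType) (r p R : nat) (v : nat)
    (A : nat -> 'M[K]_r) (C C' : nat -> 'M[K]_r) (A0 A0' : 'M[K]_r) :
  (2 <= p)%N -> (1 <= R)%N ->
  laurent_GL v A ->
  in_I_zR R C -> in_I_zR R C' ->
  A0 \in unitmx -> A0' \in unitmx ->
  mahler_gauge p v A C A0 -> mahler_gauge p v A C' A0' ->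
  [/\ A0 = A0',
      (forall i : nat, (R <= i)%N -> ~ conj_eigenvalue A0 (p%:R ^+ i)) ->
        forall k, C k = C' k
    & p_restricted p A0 ->
        forall i : nat, (1 <= i)%N -> ~ conj_eigenvalue A0 (p%:R ^+ i)].
Proof.
move=> p_ge2 _ _ IC IC' uA0 _ [D [DC [CD DAC]]] [D' [_ [CD' DAC']]].
have p0 : p%:R != 0 :> K by rewrite pnatr_eq0 -lt0n ltnW.
have {}DAC : psmul (psmul D A) C = psmono v A0.
  exact: functional_extensionality.
have {}DAC' : psmul (psmul D' A) C' = psmono v A0'.
  exact: functional_extensionality.
have transition := gauge_transition_coef p0 CD DAC CD' DAC'.
have IG : in_I_zR R (psmul D (psdil p C')).
  apply: in_I_zR_mul (in_I_zR_psdil p IC').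
  exact: in_I_zR_linv (in_I_zR_psdil p IC) DC.
have A0_eq : A0 = A0'.
  have := transition 0%N; case: IG => -> _.
  by rewrite expr0 scale1r mul1mx mulmx1.
split=> // [no_eig k | restricted i i_gt0]; last first.
  exact: p_restricted_no_conj_eigenvalue (ltnW p_ge2) uA0 restricted i_gt0.
suff G1 : psmul D (psdil p C') = psone K r.
  by rewrite (gauge_transition_one p0 CD G1).
apply: (in_I_zR_eq_one IG) => m mR; apply/eqP; apply: contraT => Gm0.
case: (no_eig m mR); apply: conj_eigenvalue_intertwine uA0 Gm0 _.
by rewrite {1}A0_eq transition.
Qed.
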